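(* For the system $\dot x=Ax+ub$ with $A=\begin{pmatrix}0&1&0\\-1&0&1\\0&0&0\end{pmatrix}$, $b=(0,0,1)^T$, $x(0)=0$, and any $\gamma>0$: there is no control of the form $u(t)=(-1)^{j-1}$ on $(t_{j-1},t_j)$, $j=1,\dots,2\rho$ (i.e. with an odd number $2\rho-1$ of switchings, $\rho\ge1$), nor its negative $-u(t)$, whose interval lengths $\tau_k=t_k-t_{k-1}$ all lie in $(0,2\pi)$, which satisfies $\tau_k+\tau_{k+1}=2\pi$ for all interior consecutive intervals $2\le k\le 2\rho-2$, and which steers the system to $(\gamma,0,\gamma)$. Likewise, no control $-u(t)$ with $u$ of the form $(-1)^{j-1}$ on $(t_{j-1},t_j)$, $j=1,\dots,2\rho+1$, satisfying $\tau_k\in(0,2\pi)$, $\tau_k+\tau_{k+1}=2\pi$ for $2\le k\le 2\rho-1$, and $\tau_{2\rho}+\tau_{2\rho+1}\le2\pi$, steers the system to $(\gamma,0,\gamma)$.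
   Context: These are the structural constraints that the switching function $\Phi(t)=c-A_0\sin(t+\theta)$ of a Pontryagin extremal imposes on bang-bang controls with constant-control intervals of length less than $2\pi$. *)

From Stdlib Require Import Reals Lra Lia.
Open Scope R_scope.

Definition cont_on_closed (f : R -> R) (a b : R) : Prop :=
  forall s, a <= s <= b ->
  forall eps, 0 < eps -> exists delta, 0 < delta /\
    forall s', a <= s' <= b -> Rabs (s' - s) < delta -> Rabs (f s' - f s) < eps.

Definition tau (t : nat -> R) (k : nat) : R := t k - t (k - 1)%nat.

(* The control equals sg * (-1)^(j-1) on (t_{j-1}, t_j), j = 1..N.
   (x1,x2,x3) is the (Caratheodory) solution of
     x1' = x2,  x2' = -x1 + x3,  x3' = u,   x(0) = 0
   on [0, t N]: continuous on [0, t N], satisfying the ODE on each open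
   interval of constancy of the control. *)
Definition is_trajectory (N : nat) (t : nat -> R) (sg : R)
    (x1 x2 x3 : R -> R) : Prop :=
  x1 0 = 0 /\ x2 0 = 0 /\ x3 0 = 0 /\
  cont_on_closed x1 0 (t N) /\ cont_on_closed x2 0 (t N) /\
  cont_on_closed x3 0 (t N) /\
  forall j : nat, (1 <= j <= N)%nat -> forall s, t (j - 1)%nat < s < t j ->
    derivable_pt_lim x1 s (x2 s) /\
    derivable_pt_lim x2 s (- x1 s + x3 s) /\
    derivable_pt_lim x3 s (sg * (-1) ^ (j - 1)).

Definition steers_to (N : nat) (t : nat -> R) (sg g : R) : Prop :=
  exists x1 x2 x3 : R -> R,
    is_trajectory N t sg x1 x2 x3 /\
    x1 (t N) = g /\ x2 (t N) = 0 /\ x3 (t N) = g.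

(* On an arc of constant control c, the vector (x1 - x3, x2 - c) rotates by
   the arc length tau and x3 grows by c tau; this closed-form flow is derived
   first, from conserved quantities on the open arc and continuity at its
   ends, and encoded by the relation [arc].  Two consecutive arcs of lengths
   a and 2 pi - a with opposite controls make a full turn: the rotation
   cancels and sg * x2 increases by 2 (1 - cos a) >= 0.
   Part 1 (2 rho arcs): after the first arc sg * x2 = 1 - cos tau_1 > 0 and
   full turns keep sg * x2 >= 1 - cos tau_1, but the last arc can reach
   x1 = x3, x2 = 0 only from sg * x2 = cos tau_{2 rho} - 1 <= 0.
   Part 2 (2 rho + 1 arcs, control -u): all even arcs share a length a, the
   state after 2 rho - 1 arcs is explicit, and the two last arcs give
   cos tau_1 = 2 rho (1 - cos a) + cos (a + b), sin tau_1 = 2 rho sin a - sin (a + b)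
   plus a sign condition from gamma > 0; half-angle identities then force
   tau_1 = b and sin (a/2 + b) = 2 rho sin (a/2), contradicting an elementary
   bound. *)

From Stdlib Require Import Reals Lra Lia Nsatz.
Open Scope R_scope.

Lemma zero_derivative_constant (g : R -> R) (a b : R) :
  (forall s, a < s < b -> derivable_pt_lim g s 0) ->
  forall x y, a < x < b -> a < y < b -> g x = g y.
Proof.
  intros Hd.
  assert (ordered : forall x y, a < x < b -> a < y < b -> x < y -> g x = g y).
  { intros x y Hx Hy Hxy.
    destruct (MVT_cor2 g (fun _ => 0) x y Hxy) as [c [Hc _]].
    - intros c Hc. apply Hd. lra.
    - lra. }
  intros x y Hx Hy. destruct (Rtotal_order x y) as [H|[H|H]].
  - auto.
  - now subst.
  - symmetry; auto.
Qed.

Lemma interior_point_near (a b c d : R) :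
  a < b -> a <= c <= b -> 0 < d -> exists s, a < s < b /\ Rabs (s - c) < d.
Proof.
  intros Hab Hc Hd.
  set (e := Rmin (d / 2) ((b - a) / 4)).
  assert (He : 0 < e /\ e <= d / 2 /\ e <= (b - a) / 4).
  { unfold e. split; [apply Rmin_glb_lt; lra|]. split; [apply Rmin_l|apply Rmin_r]. }
  destruct (Rle_lt_dec c ((a + b) / 2)) as [Hlo|Hhi].
  - exists (c + e). split; [lra|]. rewrite Rabs_right; lra.
  - exists (c - e). split; [lra|]. rewrite Rabs_left; lra.
Qed.

(* If f is continuous on [0,T] and coincides on (a,b) with a function F
   continuous at c in [a,b], then f c = F c: this transports closed-form
   solutions from the open interval of constant control to its endpoints. *)
Lemma agree_on_closure (f F : R -> R) (T a b c : R) :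
  0 <= a < b -> b <= T -> cont_on_closed f 0 T -> continuity_pt F c ->
  (forall s, a < s < b -> f s = F s) -> a <= c <= b -> f c = F c.
Proof.
  intros Hab HbT Hf HF Heq Hc.
  destruct (Req_dec (f c) (F c)) as [Z|NZ]; [exact Z|exfalso].
  set (e := Rabs (f c - F c)).
  assert (He : 0 < e) by (apply Rabs_pos_lt; lra).
  destruct (Hf c ltac:(lra) (e/2) ltac:(lra)) as [d1 [Hd1 H1]].
  destruct (HF (e/2) ltac:(lra)) as [d2 [Hd2 H2]].
  destruct (interior_point_near a b c (Rmin d1 d2) ltac:(lra) Hc
              ltac:(apply Rmin_glb_lt; lra)) as [s [Hs Hsc]].
  pose proof (Rmin_l d1 d2). pose proof (Rmin_r d1 d2).
  assert (close_f : Rabs (F s - f c) < e/2).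
  { rewrite <- Heq by lra. apply H1; lra. }
  assert (close_F : Rabs (F s - F c) < e/2).
  { destruct (Req_dec s c) as [->|Hsc']; [rewrite Rminus_diag, Rabs_R0; lra|].
    apply H2. split; [split; [exact I | congruence]|]. simpl. unfold R_dist. lra. }
  assert (e <= Rabs (f c - F s) + Rabs (F s - F c)).
  { unfold e. replace (f c - F c) with ((f c - F s) + (F s - F c)) by ring.
    apply Rabs_triang. }
  rewrite Rabs_minus_sym in close_f. lra.
Qed.

(* The system x1' = x2, x2' = -x1 + x3, x3' = u with u constant on (a,b):
   x3 - u s and the vector (x1 - x3, x2 - u) rotated back by the angle s are
   conserved, which yields the general solution on (a,b). *)
Lemma constant_control_solution (f1 f2 f3 : R -> R) (u a b : R) :
  a < b ->
  (forall s, a < s < b -> derivable_pt_lim f1 s (f2 s) /\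
     derivable_pt_lim f2 s (- f1 s + f3 s) /\ derivable_pt_lim f3 s u) ->
  exists K C1 C2, forall s, a < s < b ->
    f1 s = K + u * s + C1 * cos s + C2 * sin s /\
    f2 s = u - C1 * sin s + C2 * cos s /\
    f3 s = K + u * s.
Proof.
  intros Hab Hd.
  set (g3 := (f3 - mult_real_fct u id)%F).
  set (h1 := ((f1 - f3) * cos - (f2 - fct_cte u) * sin)%F).
  set (h2 := ((f1 - f3) * sin + (f2 - fct_cte u) * cos)%F).
  assert (D3 : forall s, a < s < b -> derivable_pt_lim g3 s 0).
  { intros s Hs. destruct (Hd s Hs) as [_ [_ d3]].
    replace 0 with (u - u * 1) by ring.
    apply derivable_pt_lim_minus; [exact d3|].
    apply derivable_pt_lim_scal, derivable_pt_lim_id. }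
  assert (D1 : forall s, a < s < b -> derivable_pt_lim h1 s 0).
  { intros s Hs. destruct (Hd s Hs) as [d1 [d2 d3]].
    pose proof (derivable_pt_lim_minus _ _ _ _ _
      (derivable_pt_lim_mult _ _ _ _ _ (derivable_pt_lim_minus _ _ _ _ _ d1 d3)
         (derivable_pt_lim_cos s))
      (derivable_pt_lim_mult _ _ _ _ _
         (derivable_pt_lim_minus _ _ _ _ _ d2 (derivable_pt_lim_const u s))
         (derivable_pt_lim_sin s))) as L.
    unfold h1. match type of L with derivable_pt_lim _ _ ?l => replace 0 with l end;
      [exact L|].
    unfold minus_fct, mult_fct, fct_cte. ring. }
  assert (D2 : forall s, a < s < b -> derivable_pt_lim h2 s 0).
  { intros s Hs. destruct (Hd s Hs) as [d1 [d2 d3]].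
    pose proof (derivable_pt_lim_plus _ _ _ _ _
      (derivable_pt_lim_mult _ _ _ _ _ (derivable_pt_lim_minus _ _ _ _ _ d1 d3)
         (derivable_pt_lim_sin s))
      (derivable_pt_lim_mult _ _ _ _ _
         (derivable_pt_lim_minus _ _ _ _ _ d2 (derivable_pt_lim_const u s))
         (derivable_pt_lim_cos s))) as L.
    unfold h2. match type of L with derivable_pt_lim _ _ ?l => replace 0 with l end;
      [exact L|].
    unfold minus_fct, mult_fct, fct_cte. ring. }
  set (m := (a + b) / 2).
  assert (Hm : a < m < b) by (unfold m; lra).
  exists (g3 m), (h1 m), (h2 m). intros s Hs.
  rewrite <- (zero_derivative_constant g3 a b D3 s m Hs Hm),
          <- (zero_derivative_constant h1 a b D1 s m Hs Hm),
          <- (zero_derivative_constant h2 a b D2 s m Hs Hm).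
  unfold g3, h1, h2, plus_fct, minus_fct, mult_fct, fct_cte, mult_real_fct, id.
  pose proof (sin2_cos2 s) as P. unfold Rsqr in P.
  split; [|split]; nsatz.
Qed.

Lemma constant_control_flow (f1 f2 f3 : R -> R) (u a b T : R) :
  0 <= a < b -> b <= T ->
  cont_on_closed f1 0 T -> cont_on_closed f2 0 T -> cont_on_closed f3 0 T ->
  (forall s, a < s < b -> derivable_pt_lim f1 s (f2 s) /\
     derivable_pt_lim f2 s (- f1 s + f3 s) /\ derivable_pt_lim f3 s u) ->
  f1 b - f3 b = cos (b - a) * (f1 a - f3 a) + sin (b - a) * (f2 a - u) /\
  f2 b - u = - sin (b - a) * (f1 a - f3 a) + cos (b - a) * (f2 a - u) /\
  f3 b = f3 a + u * (b - a).
Proof.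
  intros Hab HbT c1 c2 c3 Hd.
  destruct (constant_control_solution f1 f2 f3 u a b ltac:(lra) Hd)
    as [K [C1 [C2 E]]].
  set (F1 := fun s => K + u * s + C1 * cos s + C2 * sin s).
  set (F2 := fun s => u - C1 * sin s + C2 * cos s).
  set (F3 := fun s => K + u * s).
  assert (ends : forall c, a <= c <= b -> f1 c = F1 c /\ f2 c = F2 c /\ f3 c = F3 c).
  { intros c Hc.
    split; [|split]; eapply agree_on_closure; eauto;
      try (intros s Hs; apply (E s Hs)); unfold F1, F2, F3; reg. }
  destruct (ends a ltac:(lra)) as [-> [-> ->]].
  destruct (ends b ltac:(lra)) as [-> [-> ->]].
  unfold F1, F2, F3. rewrite cos_minus, sin_minus.
  pose proof (sin2_cos2 a) as P. unfold Rsqr in P.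
  split; [|split]; nsatz.
Qed.

(* One arc of constant control c and length tau, in the coordinates
   W = x1 - x3, X = x2, Y = x3: (W, X - c) is rotated by tau and Y grows by c tau. *)
Definition arc (c tau W X Y W' X' Y' : R) : Prop :=
  W' = cos tau * W + sin tau * (X - c) /\
  X' - c = - sin tau * W + cos tau * (X - c) /\
  Y' = Y + c * tau.

Lemma arc_from_rest (c tau W X Y : R) :
  c * c = 1 -> arc c tau 0 0 0 W X Y ->
  c * X = 1 - cos tau /\ c * W = - sin tau /\ Y = c * tau.
Proof. intros Hc [HW [HX HY]]. split; [|split]; nsatz. Qed.

Lemma arc_to_rest (c tau W X Y Y' : R) :
  c * c = 1 -> arc c tau W X Y 0 0 Y' -> c * X = 1 - cos tau.
Proof.
  intros Hc [HW [HX _]]. pose proof (sin2_cos2 tau) as P. unfold Rsqr in P. nsatz.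
Qed.

Lemma full_turn (sg a W X Y W1 X1 Y1 W2 X2 Y2 : R) :
  sg * sg = 1 -> arc (- sg) a W X Y W1 X1 Y1 ->
  arc sg (2 * PI - a) W1 X1 Y1 W2 X2 Y2 ->
  sg * X2 = sg * X + 2 * (1 - cos a) /\ sg * W2 = sg * W + 2 * sin a /\
  Y2 = Y + sg * (2 * PI - 2 * a).
Proof.
  intros Hs [H1 [H2 H3]] [H4 [H5 H6]].
  rewrite cos_minus, sin_minus, cos_2PI, sin_2PI in H4, H5.
  pose proof (sin2_cos2 a) as P. unfold Rsqr in P.
  split; [|split]; nsatz.
Qed.

Lemma two_arcs_to_rest (sg a b W X Y W1 X1 Y1 g : R) :
  sg * sg = 1 -> arc (- sg) a W X Y W1 X1 Y1 -> arc sg b W1 X1 Y1 0 0 g ->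
  sg * W = sin (a + b) - 2 * sin a /\ sg * X + 1 = 2 * cos a - cos (a + b) /\
  g = Y + sg * (b - a).
Proof.
  intros Hs [H1 [H2 H3]] [H4 [H5 H6]].
  rewrite sin_plus, cos_plus.
  pose proof (sin2_cos2 a) as P. unfold Rsqr in P.
  pose proof (sin2_cos2 b) as Q. unfold Rsqr in Q.
  split; [|split]; nsatz.
Qed.

Lemma switch_times_bounds (N : nat) (t : nat -> R) :
  t 0%nat = 0 -> (forall k, (1 <= k <= N)%nat -> 0 < tau t k) ->
  forall j, (j <= N)%nat -> 0 <= t j <= t N.
Proof.
  intros H0 Ht. unfold tau in Ht.
  assert (incr : forall d j, (j + d <= N)%nat -> t j <= t (j + d)%nat).
  { induction d as [|d IH]; intros j Hj.
    - rewrite Nat.add_0_r. lra.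
    - specialize (IH j ltac:(lia)). specialize (Ht (j + S d)%nat ltac:(lia)).
      replace (j + S d - 1)%nat with (j + d)%nat in Ht by lia. lra. }
  intros j Hj. split.
  - pose proof (incr j 0%nat ltac:(lia)). simpl in *. lra.
  - pose proof (incr (N - j)%nat j ltac:(lia)) as E.
    now replace (j + (N - j))%nat with N in E by lia.
Qed.

Section Trajectory.

Variables (N : nat) (t : nat -> R) (sg : R) (x1 x2 x3 : R -> R).
Hypothesis traj : is_trajectory N t sg x1 x2 x3.
Hypothesis t0 : t 0%nat = 0.
Hypothesis tau_pos : forall k, (1 <= k <= N)%nat -> 0 < tau t k.
Hypothesis sg_unit : sg * sg = 1.

Local Notation W j := (x1 (t j) - x3 (t j)).
Local Notation X j := (x2 (t j)).
Local Notation Y j := (x3 (t j)).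

Lemma trajectory_arc (j : nat) : (1 <= j <= N)%nat ->
  arc (sg * (-1) ^ (j - 1)) (tau t j)
      (W (j - 1)%nat) (X (j - 1)%nat) (Y (j - 1)%nat) (W j) (X j) (Y j).
Proof.
  intros Hj. destruct traj as [_ [_ [_ [c1 [c2 [c3 Hd]]]]]].
  pose proof (switch_times_bounds N t t0 tau_pos (j - 1) ltac:(lia)).
  pose proof (switch_times_bounds N t t0 tau_pos j ltac:(lia)).
  pose proof (tau_pos j Hj). unfold tau in *.
  apply (constant_control_flow x1 x2 x3 _ _ _ (t N)); try lra; auto.
Qed.

Lemma odd_arc (m : nat) : (2 * m + 1 <= N)%nat ->
  arc sg (tau t (2 * m + 1)) (W (2 * m)%nat) (X (2 * m)%nat) (Y (2 * m)%nat)
      (W (2 * m + 1)%nat) (X (2 * m + 1)%nat) (Y (2 * m + 1)%nat).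
Proof.
  intros Hm. pose proof (trajectory_arc (2 * m + 1) ltac:(lia)) as A.
  replace (2 * m + 1 - 1)%nat with (2 * m)%nat in A by lia.
  now rewrite pow_1_even, Rmult_1_r in A.
Qed.

Lemma even_arc (m : nat) : (2 * m + 2 <= N)%nat ->
  arc (- sg) (tau t (2 * m + 2)) (W (2 * m + 1)%nat) (X (2 * m + 1)%nat)
      (Y (2 * m + 1)%nat) (W (2 * m + 2)%nat) (X (2 * m + 2)%nat) (Y (2 * m + 2)%nat).
Proof.
  intros Hm. pose proof (trajectory_arc (2 * m + 2) ltac:(lia)) as A.
  replace (2 * m + 2 - 1)%nat with (S (2 * m)) in A by lia.
  rewrite pow_1_odd in A. replace (2 * m + 1)%nat with (S (2 * m)) by lia.
  now replace (- sg) with (sg * -1) by ring.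
Qed.

Lemma first_arc_state : (1 <= N)%nat ->
  sg * X 1%nat = 1 - cos (tau t 1) /\ sg * W 1%nat = - sin (tau t 1) /\
  Y 1%nat = sg * tau t 1.
Proof.
  intros HN. destruct traj as [I1 [I2 [I3 _]]].
  apply arc_from_rest; [exact sg_unit|].
  pose proof (odd_arc 0 HN) as A. simpl in A. now rewrite t0, I1, I2, I3, Rminus_0_r in A.
Qed.

Lemma pair_of_arcs (m : nat) : (2 * m + 3 <= N)%nat ->
  tau t (2 * m + 2) + tau t (2 * m + 3) = 2 * PI ->
  sg * X (2 * m + 3)%nat = sg * X (2 * m + 1)%nat + 2 * (1 - cos (tau t (2 * m + 2))) /\
  sg * W (2 * m + 3)%nat = sg * W (2 * m + 1)%nat + 2 * sin (tau t (2 * m + 2)) /\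
  Y (2 * m + 3)%nat = Y (2 * m + 1)%nat + sg * (2 * PI - 2 * tau t (2 * m + 2)).
Proof.
  intros Hm Hsum.
  pose proof (odd_arc (S m) ltac:(lia)) as B.
  replace (2 * S m)%nat with (2 * m + 2)%nat in B by lia.
  replace (2 * m + 2 + 1)%nat with (2 * m + 3)%nat in B by lia.
  replace (tau t (2 * m + 3)) with (2 * PI - tau t (2 * m + 2)) in B by lra.
  exact (full_turn _ _ _ _ _ _ _ _ _ _ _ sg_unit (even_arc m ltac:(lia)) B).
Qed.

(* Part 1 invariant: full turns only increase sg * x2, starting from
   sg * x2 (t 1) = 1 - cos (tau 1). *)
Lemma odd_states_lower_bound (m : nat) : (2 * m + 1 <= N)%nat ->
  (forall i, (i < m)%nat -> tau t (2 * i + 2) + tau t (2 * i + 3) = 2 * PI) ->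
  1 - cos (tau t 1) <= sg * X (2 * m + 1)%nat.
Proof.
  induction m as [|m IH]; intros Hm Hpairs.
  - destruct (first_arc_state ltac:(lia)) as [H _]. simpl. lra.
  - destruct (pair_of_arcs m ltac:(lia) (Hpairs m ltac:(lia))) as [H _].
    replace (2 * S m + 1)%nat with (2 * m + 3)%nat by lia.
    pose proof (COS_bound (tau t (2 * m + 2))).
    assert (1 - cos (tau t 1) <= sg * X (2 * m + 1)%nat)
      by (apply IH; [lia | intros i Hi; apply Hpairs; lia]).
    lra.
Qed.

Lemma odd_states_closed_form (a : R) (m : nat) : (2 * m + 1 <= N)%nat ->
  (forall i, (i < m)%nat -> tau t (2 * i + 2) = a /\ tau t (2 * i + 3) = 2 * PI - a) ->
  sg * X (2 * m + 1)%nat = 1 - cos (tau t 1) + 2 * INR m * (1 - cos a) /\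
  sg * W (2 * m + 1)%nat = 2 * INR m * sin a - sin (tau t 1) /\
  Y (2 * m + 1)%nat = sg * (tau t 1 + INR m * (2 * PI - 2 * a)).
Proof.
  induction m as [|m IH]; intros Hm Hlen.
  - destruct (first_arc_state ltac:(lia)) as [H1 [H2 H3]]. simpl. lra.
  - destruct (Hlen m ltac:(lia)) as [Ha Hb].
    destruct (pair_of_arcs m ltac:(lia) ltac:(lra)) as [P1 [P2 P3]].
    destruct IH as [J1 [J2 J3]]; [lia | intros i Hi; apply Hlen; lia |].
    replace (2 * S m + 1)%nat with (2 * m + 3)%nat by lia.
    rewrite Ha in P1, P2, P3. rewrite S_INR. split; [|split]; lra.
Qed.

End Trajectory.

Lemma cos_lt_1 (x : R) : 0 < x < 2 * PI -> cos x < 1.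
Proof.
  intros H. replace x with (2 * (x / 2)) by field. rewrite cos_2a_sin.
  assert (0 < sin (x / 2)) by (apply sin_gt_0; lra). nra.
Qed.

Lemma sin_eq_0_near_0 (x : R) : - PI < x < PI -> sin x = 0 -> x = 0.
Proof.
  intros Hx Hs. destruct (Rtotal_order x 0) as [Hlt|[Heq|Hgt]]; auto; exfalso.
  - assert (0 < sin (- x)) by (apply sin_gt_0; lra). rewrite sin_neg in *. lra.
  - assert (0 < sin x) by (apply sin_gt_0; lra). lra.
Qed.

(* An elementary bound: sin (h + b) < 2 sin h, either because b < h
   (then sin (h + b) = 2 sin h cos b - sin (h - b)) or because h is obtuse
   (then cos h < 0 < sin b). *)
Lemma sin_add_lt_twice (h b : R) :
  0 < h < PI -> 0 < b -> 2 * h + b <= 2 * PI -> b < h \/ PI / 2 < h ->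
  sin (h + b) < 2 * sin h.
Proof.
  intros Hh Hb Hsum Hcase.
  assert (0 < sin h) by (apply sin_gt_0; lra).
  pose proof (COS_bound b).
  destruct Hcase as [Hbh|Hobtuse].
  - assert (0 < sin (h - b)) by (apply sin_gt_0; lra).
    assert (sin (h + b) = 2 * sin h * cos b - sin (h - b))
      by (rewrite sin_plus, sin_minus; ring).
    nra.
  - assert (cos h < 0) by (apply cos_lt_0; lra).
    assert (0 < sin b) by (apply sin_gt_0; lra).
    rewrite sin_plus. nra.
Qed.

(* Sum-to-product form of the two trigonometric end conditions of part 2,
   in the half angles S = (t1 + a + b)/2, D = (t1 - b)/2 and a/2. *)
Lemma end_conditions_half_angles (r t1 a b : R) :
  cos t1 = 2 * r * (1 - cos a) + cos (a + b) ->
  sin t1 = 2 * r * sin a - sin (a + b) ->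
  sin ((t1 + a + b) / 2) * sin ((t1 - b) / 2) = 0 /\
  sin ((t1 + a + b) / 2) * cos ((t1 - b) / 2) = 2 * r * sin (a / 2).
Proof.
  set (h := a / 2). set (S := (t1 + a + b) / 2). set (D := (t1 - b) / 2).
  replace t1 with (S + D - h) by (unfold S, D, h; field).
  replace (a + b) with (S - D + h) by (unfold S, D, h; field).
  replace a with (2 * h) by (unfold h; field).
  intros HR HI.
  repeat rewrite ?cos_minus, ?cos_plus, ?sin_minus, ?sin_plus, ?cos_2a, ?sin_2a in HR.
  repeat rewrite ?cos_minus, ?cos_plus, ?sin_minus, ?sin_plus, ?cos_2a, ?sin_2a in HI.
  pose proof (sin2_cos2 S) as PS. pose proof (sin2_cos2 D) as PD.
  pose proof (sin2_cos2 h) as Ph. unfold Rsqr in PS, PD, Ph.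
  split; nsatz.
Qed.

(* The trigonometric core of part 2: the end conditions force t1 = b and then
   sin (a/2 + b) = 2 r sin (a/2) >= 2 sin (a/2), which the sign condition
   coming from gamma > 0 rules out. *)
Lemma even_case_trig_contradiction (r t1 a b : R) :
  1 <= r -> 0 < t1 < 2 * PI -> 0 < a < 2 * PI -> 0 < b -> a + b <= 2 * PI ->
  cos t1 = 2 * r * (1 - cos a) + cos (a + b) ->
  sin t1 = 2 * r * sin a - sin (a + b) ->
  t1 + (r - 1) * (2 * PI - 2 * a) - a + b < 0 -> False.
Proof.
  intros Hr Ht Ha Hb Hab HR HI Hsign.
  destruct (end_conditions_half_angles r t1 a b HR HI) as [E1 E2].
  assert (Hh : 0 < sin (a / 2)) by (apply sin_gt_0; lra).
  assert (HS : sin ((t1 + a + b) / 2) <> 0) by (intro Z; rewrite Z in E2; nra).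
  assert (HD : (t1 - b) / 2 = 0).
  { apply sin_eq_0_near_0; [lra|].
    destruct (Rmult_integral _ _ E1); [contradiction | assumption]. }
  replace ((t1 - b) / 2) with 0 in E2 by lra.
  replace ((t1 + a + b) / 2) with (a / 2 + b) in E2 by lra.
  rewrite cos_0, Rmult_1_r in E2.
  assert (sin (a / 2 + b) < 2 * sin (a / 2)).
  { apply sin_add_lt_twice; [lra | lra | lra |].
    destruct (Rle_lt_dec a PI) as [Hle|Hgt]; [left | right; lra].
    assert (0 <= (r - 1) * (2 * PI - 2 * a)) by (apply Rmult_le_pos; lra).
    lra. }
  nra.
Qed.

Lemma alternating_even_terms (f : nat -> R) (c : R) (M : nat) :
  (forall k, (2 <= k)%nat -> (k < M)%nat -> f k + f (k + 1)%nat = c) ->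
  forall i, (2 * i + 2 <= M)%nat -> f (2 * i + 2)%nat = f 2%nat.
Proof.
  intros Hsum. induction i as [|i IH]; intros Hi; [reflexivity|].
  pose proof (Hsum (2 * i + 2)%nat ltac:(lia) ltac:(lia)) as E1.
  pose proof (Hsum (2 * i + 3)%nat ltac:(lia) ltac:(lia)) as E2.
  replace (2 * i + 2 + 1)%nat with (2 * i + 3)%nat in E1 by lia.
  replace (2 * i + 3 + 1)%nat with (2 * S i + 2)%nat in E2 by lia.
  rewrite IH in E1 by lia. lra.
Qed.

(* Part 1: with 2 rho arcs, sg * x2 stays >= 1 - cos tau_1 > 0 at the odd
   switching times, while the last arc (control -sg) can only reach
   x1 = x3, x2 = 0 from a state with sg * x2 = cos tau_{2 rho} - 1 <= 0. *)
Lemma no_steering_odd_switchings (gamma : R) (rho : nat) (t : nat -> R) (sg : R) :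
  (1 <= rho)%nat -> (sg = 1 \/ sg = -1) -> t 0%nat = 0 ->
  (forall k, (1 <= k <= 2 * rho)%nat -> 0 < tau t k < 2 * PI) ->
  (forall k, (2 <= k <= 2 * rho - 2)%nat -> tau t k + tau t (k + 1) = 2 * PI) ->
  ~ steers_to (2 * rho) t sg gamma.
Proof.
  intros Hrho Hsg H0 Hlen Hpair [x1 [x2 [x3 [Tr [E1 [E2 E3]]]]]].
  assert (Hs : sg * sg = 1) by (destruct Hsg; subst; ring).
  assert (Hs_opp : - sg * - sg = 1) by (rewrite <- Hs; ring).
  assert (Hpos : forall k, (1 <= k <= 2 * rho)%nat -> 0 < tau t k)
    by (intros k Hk; apply Hlen, Hk).
  assert (bound : 1 - cos (tau t 1) <= sg * x2 (t (2 * (rho - 1) + 1)%nat)).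
  { apply (odd_states_lower_bound (2 * rho) t sg x1 x2 x3 Tr H0 Hpos Hs); [lia|].
    intros i Hi. replace (2 * i + 3)%nat with (2 * i + 2 + 1)%nat by lia.
    apply Hpair. lia. }
  pose proof (even_arc (2 * rho) t sg x1 x2 x3 Tr H0 Hpos (rho - 1) ltac:(lia)) as last.
  replace (2 * (rho - 1) + 2)%nat with (2 * rho)%nat in last by lia.
  rewrite E1, E2, E3, Rminus_diag in last.
  pose proof (arc_to_rest _ _ _ _ _ _ Hs_opp last) as Hend.
  pose proof (cos_lt_1 (tau t 1) (Hlen 1%nat ltac:(lia))).
  pose proof (COS_bound (tau t (2 * rho))). lra.
Qed.

(* Part 2: with 2 rho + 1 arcs and control -u, all even arcs have the same
   length a, the odd switching states are explicit, and the two last arcs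
   reduce the steering condition to [even_case_trig_contradiction]. *)
Lemma no_steering_even_switchings (gamma : R) (rho : nat) (t : nat -> R) :
  0 < gamma -> (1 <= rho)%nat -> t 0%nat = 0 ->
  (forall k, (1 <= k <= 2 * rho + 1)%nat -> 0 < tau t k < 2 * PI) ->
  (forall k, (2 <= k <= 2 * rho - 1)%nat -> tau t k + tau t (k + 1) = 2 * PI) ->
  tau t (2 * rho) + tau t (2 * rho + 1) <= 2 * PI ->
  ~ steers_to (2 * rho + 1) t (-1) gamma.
Proof.
  intros Hg Hrho H0 Hlen Hpair Hlast [x1 [x2 [x3 [Tr [E1 [E2 E3]]]]]].
  assert (Hs : -1 * -1 = 1) by ring.
  assert (Hpos : forall k, (1 <= k <= 2 * rho + 1)%nat -> 0 < tau t k)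
    by (intros k Hk; apply Hlen, Hk).
  set (a := tau t 2).
  assert (even_len : forall i, (2 * i + 2 <= 2 * rho)%nat -> tau t (2 * i + 2) = a).
  { apply (alternating_even_terms (tau t) (2 * PI)). intros k Hk Hk'. apply Hpair. lia. }
  destruct (odd_states_closed_form (2 * rho + 1) t (-1) x1 x2 x3 Tr H0 Hpos Hs a
              (rho - 1) ltac:(lia)) as [C1 [C2 C3]].
  { intros i Hi. split; [apply even_len; lia|].
    rewrite <- (even_len i) by lia.
    replace (2 * i + 3)%nat with (2 * i + 2 + 1)%nat by lia.
    pose proof (Hpair (2 * i + 2)%nat ltac:(lia)). lra. }
  pose proof (even_arc (2 * rho + 1) t (-1) x1 x2 x3 Tr H0 Hpos (rho - 1) ltac:(lia)) as A.
  pose proof (odd_arc (2 * rho + 1) t (-1) x1 x2 x3 Tr H0 Hpos rho ltac:(lia)) as B.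
  replace (2 * (rho - 1) + 2)%nat with (2 * rho)%nat in A by lia.
  assert (last_even : tau t (2 * rho) = a).
  { replace (2 * rho)%nat with (2 * (rho - 1) + 2)%nat by lia. apply even_len. lia. }
  rewrite last_even in A, Hlast.
  rewrite E1, E2, E3, Rminus_diag in B.
  destruct (two_arcs_to_rest _ _ _ _ _ _ _ _ _ _ Hs A B) as [G1 [G2 G3]].
  rewrite minus_INR in C1, C2, C3 by lia. simpl INR in C1, C2, C3.
  pose proof (Hlen 1%nat ltac:(lia)) as T1.
  pose proof (Hlen 2%nat ltac:(lia)) as T2.
  pose proof (Hlen (2 * rho + 1)%nat ltac:(lia)) as T3.
  apply (even_case_trig_contradiction (INR rho) (tau t 1) a (tau t (2 * rho + 1)));
    [apply (le_INR 1); lia | exact T1 | exact T2 | lra | exact Hlast | nra | nra | nra].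
Qed.

Theorem mainTheorem8 (gamma : R) (hg : 0 < gamma) :
  (* odd number 2*rho - 1 of switchings, control u or -u *)
  (forall (rho : nat) (t : nat -> R) (sg : R),
     (1 <= rho)%nat ->
     (sg = 1 \/ sg = -1) ->
     t 0%nat = 0 ->
     (forall k, (1 <= k <= 2 * rho)%nat -> 0 < tau t k < 2 * PI) ->
     (forall k, (2 <= k <= 2 * rho - 2)%nat -> tau t k + tau t (k + 1) = 2 * PI) ->
     ~ steers_to (2 * rho) t sg gamma) /\
  (* even number 2*rho of switchings, control -u *)
  (forall (rho : nat) (t : nat -> R),
     (1 <= rho)%nat ->
     t 0%nat = 0 ->
     (forall k, (1 <= k <= 2 * rho + 1)%nat -> 0 < tau t k < 2 * PI) ->
     (forall k, (2 <= k <= 2 * rho - 1)%nat -> tau t k + tau t (k + 1) = 2 * PI) ->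
     tau t (2 * rho) + tau t (2 * rho + 1) <= 2 * PI ->
     ~ steers_to (2 * rho + 1) t (-1) gamma).
Proof.
  split.
  - intros rho t sg. apply no_steering_odd_switchings.
  - intros rho t. apply no_steering_even_switchings, hg.
Qed.
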